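(* Let $\pi\in\mathfrak{S}_n$ avoid $231$. Let $A,B,C$ be the blocks of a collection of crossing $3$-cycles of $\pi$ (so $A<B<C$), and let $(e_1,f_1)$ and $(e_2,f_2)$ be $2$-cycles of $\pi$ with $e_1<f_1<e_2<f_2$. Then neither of the following configurations occurs: (1) $A<e_1<f_1<e_2<B<f_2<C$; (2) $A<e_1<B<f_1<e_2<f_2<C$.
   Context: A permutation avoids $231$ if there are no indices $i<j<k$ with $\pi_k<\pi_i<\pi_j$. A collection of crossing $3$-cycles of $\pi$ is a nonempty set of $3$-cycles $(a_i,c_i,b_i)$ (meaning $a_i\mapsto c_i\mapsto b_i\mapsto a_i$) of $\pi$ with $a_i<b_i<c_i$, such that $a_i<b_j<c_k$ for all $i,j,k$; its blocks are $A=\{a_i\}$, $B=\{b_i\}$, $C=\{c_i\}$. For sets $S,T$ and an element $t$, $S<T$ means every element of $S$ is less than every element of $T$, and $S<t$ (resp. $t<S$) means every element of $S$ is less (resp. greater) than $t$. *)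

From mathcomp Require Import all_boot all_order all_fingroup.
Set Implicit Arguments. Unset Strict Implicit. Unset Printing Implicit Defensive.

(* Permutations of 'I_n (0-indexed positions; order-isomorphic to [1..n]). *)

Definition avoids231 n (s : 'S_n) : Prop :=
  forall i j k : 'I_n, i < j -> j < k -> ~ (s k < s i /\ s i < s j).

Definition three_cycle n (s : 'S_n) (a b c : 'I_n) : Prop :=
  a < b /\ b < c /\ s a = c /\ s c = b /\ s b = a.

Definition two_cycle n (s : 'S_n) (e f : 'I_n) : Prop :=
  e < f /\ s e = f /\ s f = e.

(* A collection of crossing 3-cycles, each represented by the triple (a,b,c)
   of the cycle (a,c,b); blocks are A = {a}, B = {b}, C = {c}. *)
Definition crossing_collection n (s : 'S_n) (X : {set 'I_n * 'I_n * 'I_n}) : Prop :=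
  X != set0 /\
  (forall t, t \in X -> three_cycle s t.1.1 t.1.2 t.2) /\
  (forall t u v, t \in X -> u \in X -> v \in X ->
     t.1.1 < u.1.2 /\ u.1.2 < v.2).

Definition blockA n (X : {set 'I_n * 'I_n * 'I_n}) : {set 'I_n} := [set t.1.1 | t in X].
Definition blockB n (X : {set 'I_n * 'I_n * 'I_n}) : {set 'I_n} := [set t.1.2 | t in X].
Definition blockC n (X : {set 'I_n * 'I_n * 'I_n}) : {set 'I_n} := [set t.2 | t in X].

Definition set_lt n (S : {set 'I_n}) (t : 'I_n) : Prop := forall x, x \in S -> x < t.
Definition lt_set n (t : 'I_n) (S : {set 'I_n}) : Prop := forall x, x \in S -> t < x.

From mathcomp Require Import all_boot all_order all_fingroup.
Set Implicit Arguments. Unset Strict Implicit. Unset Printing Implicit Defensive.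

(* A single 3-cycle (a,c,b) of the collection already suffices: in
   configuration (1) the positions f1 < e2 < b carry the values e1, f2, a, and
   in configuration (2) the positions e1 < e2 < c carry f1, f2, b; both are
   occurrences of 231. *)

Section TwoCyclesAndThreeCycle.

Variables (n : nat) (s : 'S_n) (a b c e1 f1 e2 f2 : 'I_n).
Hypotheses (s231 : avoids231 s) (abc : three_cycle s a b c).
Hypotheses (ef1 : two_cycle s e1 f1) (ef2 : two_cycle s e2 f2).
Hypothesis lt_f1e2 : f1 < e2.

Lemma no_two_cycles_between_A_B : a < e1 -> e2 < b -> False.
Proof.
move: abc ef1 ef2 => [_ [_ [_ [_ sb]]]] [lt_e1f1 [_ sf1]] [lt_e2f2 [se2 _]].
move=> lt_ae1 lt_e2b; apply: (s231 lt_f1e2 lt_e2b).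
rewrite sf1 se2 sb; split=> //.
exact: ltn_trans lt_e1f1 (ltn_trans lt_f1e2 lt_e2f2).
Qed.

Lemma no_two_cycles_between_B_C : b < f1 -> f2 < c -> False.
Proof.
move: abc ef1 ef2 => [_ [_ [_ [sc _]]]] [lt_e1f1 [se1 _]] [lt_e2f2 [se2 _]].
move=> lt_bf1 lt_f2c.
apply: (s231 (ltn_trans lt_e1f1 lt_f1e2) (ltn_trans lt_e2f2 lt_f2c)).
by rewrite se1 se2 sc; split=> //; apply: ltn_trans lt_f1e2 lt_e2f2.
Qed.

End TwoCyclesAndThreeCycle.

Lemma crossing_collection_cycle n (s : 'S_n) (X : {set 'I_n * 'I_n * 'I_n}) :
  crossing_collection s X ->
  exists a b c, [/\ three_cycle s a b c, a \in blockA X, b \in blockB X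
                   & c \in blockC X].
Proof.
move=> [/set0Pn [t tX] [X3 _]]; exists t.1.1, t.1.2, t.2.
by split; [exact: X3 | apply: imset_f ..].
Qed.

Theorem lemma3p5 (n : nat) (s : 'S_n) (X : {set 'I_n * 'I_n * 'I_n})
    (e1 f1 e2 f2 : 'I_n) :
  avoids231 s ->
  crossing_collection s X ->
  two_cycle s e1 f1 -> two_cycle s e2 f2 ->
  e1 < f1 -> f1 < e2 -> e2 < f2 ->
  (* configuration (1): A < e1 < f1 < e2 < B < f2 < C *)
  ~ (set_lt (blockA X) e1 /\ e1 < f1 /\ f1 < e2 /\ lt_set e2 (blockB X) /\
     set_lt (blockB X) f2 /\ lt_set f2 (blockC X)) /\
  (* configuration (2): A < e1 < B < f1 < e2 < f2 < C *)
  ~ (set_lt (blockA X) e1 /\ lt_set e1 (blockB X) /\ set_lt (blockB X) f1 /\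
     f1 < e2 /\ e2 < f2 /\ lt_set f2 (blockC X)).
Proof.
move=> s231 /crossing_collection_cycle [a [b [c [abc aA bB cC]]]] ef1 ef2.
move=> _ lt_f1e2 _.
split.
- move=> [A_e1 [_ [_ [e2_B _]]]].
  exact: no_two_cycles_between_A_B s231 abc ef1 ef2 lt_f1e2 (A_e1 a aA) (e2_B b bB).
- move=> [_ [_ [B_f1 [_ [_ f2_C]]]]].
  exact: no_two_cycles_between_B_C s231 abc ef1 ef2 lt_f1e2 (B_f1 b bB) (f2_C c cC).
Qed.
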